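(* Let $n_u, K, C, I$ be positive integers. For each $c\in\{1,\dots,C\}$, each $k\in\{1,\dots,K\}$ and each $i\in\{0,1,\dots,I\}$, let $\hat{\Sigma}^{i,c}_k$ be a symmetric positive definite $n_u\times n_u$ real matrix written as $\hat{\Sigma}^{i,c}_k=(\hat{\Sigma}^{\frac12,i,c}_k)^\top \hat{\Sigma}^{\frac12,i,c}_k$ for some square-root factor $\hat{\Sigma}^{\frac12,i,c}_k\in\mathbb{R}^{n_u\times n_u}$. Set $\hat{\sigma}^{i,c}_k=\operatorname{vec}(\hat{\Sigma}^{\frac12,i,c}_k)\in\mathbb{R}^{n_u^2}$ and $\hat{\sigma}^{i,c}=\operatorname{col}(\hat{\sigma}^{i,c}_1,\dots,\hat{\sigma}^{i,c}_K)\in\mathbb{R}^{n_u^2K}$. Assume that for every $c$ and every $i\in\{0,\dots,I-1\}$ the update $$\hat{\sigma}^{i+1,c}=\mathcal{I}^{i,c}_\Sigma\,\hat{\sigma}^{i,c}$$ holds, where $\mathcal{I}^{i,c}_\Sigma$ is a symmetric $n_u^2K\times n_u^2K$ matrix satisfying $0\le \mathcal{I}^{i,c}_\Sigma\le \mathbf{I}$ in the positive semidefinite (Loewner) order. For each $k$ define $$\Sigma^L_k=\left(\frac{1}{C}\sum_{c=1}^C\big(\operatorname{diag}(\sigma(\hat{\Sigma}^{I,c}_k))\big)^{-1}\right)^{-1},$$ where $\sigma(\hat{\Sigma}^{I,c}_k)$ denotes the vector of the $n_u$ eigenvalues of $\hat{\Sigma}^{I,c}_k$ and $\operatorname{diag}(\cdot)$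 the diagonal matrix with that vector on its diagonal. Then $$\sum_{k=1}^K \operatorname{Tr}\big((\Sigma^L_k)^{-1}\big)\;\ge\;\frac{n_u^2K^2}{C}\sum_{c=1}^C\left(\sum_{k=1}^K\operatorname{Tr}\hat{\Sigma}^{0,c}_k\right)^{-1}.$$
   Context: Here $\operatorname{vec}(\cdot)$ stacks the columns of a matrix into a single vector, $\operatorname{col}(\cdot)$ denotes vertical concatenation of vectors, and $\mathbf{I}$ is the identity matrix. In the paper, $\hat{\Sigma}^{i,c}_k$ is the covariance of a time-varying linear Gaussian control policy $\mathcal{N}(\hat F^{i,c}_k x_k+\hat e^{i,c}_k,\hat{\Sigma}^{i,c}_k)$ at time step $k$ of an episode of length $K$, obtained at iteration $i$ of an expectation-maximization procedure started from the $c$-th of $C$ initial-state distributions, with control dimension $n_u$; $\mathcal{I}^{i,c}_\Sigma$ is the principal block (corresponding to the covariance parameters) of the EM information matrix, and $\Sigma^L_k$ is the covariance of the learned global (neural-network) Gaussian policy at time step $k$. *)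

From HB Require Import structures.
From mathcomp Require Import all_boot all_order all_algebra.
Set Implicit Arguments. Unset Strict Implicit. Unset Printing Implicit Defensive.
Import Order.TTheory GRing.Theory Num.Theory.
Local Open Scope ring_scope.

Definition symmetric_mx (R : ringType) (n : nat) (A : 'M[R]_n) : Prop := A^T = A.

Definition posdef_mx (R : realFieldType) (n : nat) (A : 'M[R]_n) : Prop :=
  A^T = A /\ forall v : 'rV[R]_n, v != 0 -> 0 < (v *m A *m v^T) 0 0.

Definition psd_mx (R : realFieldType) (n : nat) (A : 'M[R]_n) : Prop :=
  A^T = A /\ forall v : 'rV[R]_n, 0 <= (v *m A *m v^T) 0 0.

(* vec: stack the columns of S into one column vector.
   mxvec is row-major, so the columns of S are the rows of S^T. *)
Definition vecc (R : Type) (n : nat) (S : 'M[R]_n) : 'cV[R]_(n * n) :=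
  (mxvec S^T)^T.

(* col(vec S_1, ..., vec S_K): vertical concatenation of the vecs. *)
Definition colvec (R : Type) (n K : nat) (S : 'I_K -> 'M[R]_n)
  : 'cV[R]_(K * (n * n)) :=
  (mxvec (\matrix_(k < K) (vecc (S k))^T))^T.

Definition eigvals_vec (R : comRingType) (n : nat) (A : 'M[R]_n) (s : 'rV[R]_n)
  : Prop := char_poly A = \prod_(j < n) ('X - (s 0 j)%:P).

From HB Require Import structures.
From mathcomp Require Import all_boot all_order all_algebra.
From mathcomp Require Import ring.
Set Implicit Arguments. Unset Strict Implicit. Unset Printing Implicit Defensive.
Import Order.TTheory GRing.Theory Num.Theory.
Local Open Scope ring_scope.

(* The total trace sum_k Tr(S_k^T S_k) of a family of
      square-root factors is the squared Euclidean norm of their stacked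
      vectorisation col(vec S_1, ..., vec S_K).  A symmetric A with
      0 <= A <= I is non-expansive, because I - A^2 splits as the sum of the
      positive semidefinite matrices (I - A), A (I - A) A and
      (I - A) A (I - A).  Iterating the EM update, the total trace at
      iteration I is at most the total trace at iteration 0.
   2. Harmonic vs. arithmetic mean.  At iteration I the total trace is the sum
      of the (positive) eigenvalues, and for N positive reals
      (sum x) (sum 1/x) >= N^2, so the sum of their inverses is at least
      N^2 / (total trace at iteration 0), with N = n_u K.
   Finally Tr((Sigma^L_k)^-1) is the average over c of the inverse
   eigenvalues, and summing the bounds of step 2 over c gives the theorem. *)

Definition qform (R : pzRingType) (n : nat) (A : 'M[R]_n) (v : 'rV[R]_n) : R :=
  (v *m A *m v^T) 0 0.

Definition sqnorm (R : pzRingType) (n : nat) (x : 'cV[R]_n) : R := (x^T *m x) 0 0.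

Lemma mxvec_sumsq (R : pzRingType) (m n : nat) (A : 'M[R]_(m, n)) :
  \sum_(x < m * n) (mxvec A 0 x) ^+ 2 = \sum_(i < m) \sum_(j < n) (A i j) ^+ 2.
Proof.
rewrite (reindex (uncurry (@mxvec_index m n))) /=; last exact: curry_mxvec_bij.
by rewrite pair_big /=; apply: eq_bigr => -[i j] _ /=; rewrite mxvecE.
Qed.

Lemma sqnorm_vecc (R : comPzRingType) (n : nat) (S : 'M[R]_n) :
  sqnorm (vecc S) = \tr (S^T *m S).
Proof.
rewrite /sqnorm mxE /vecc.
under eq_bigr do rewrite !mxE -expr2.
rewrite mxvec_sumsq /mxtrace; apply: eq_bigr => a _.
by rewrite mxE; apply: eq_bigr => b _; rewrite !mxE expr2.
Qed.

Lemma sqnorm_colvec (R : comPzRingType) (n K : nat) (S : 'I_K -> 'M[R]_n) :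
  sqnorm (colvec S) = \sum_(k < K) \tr ((S k)^T *m S k).
Proof.
rewrite /sqnorm mxE /colvec.
under eq_bigr do rewrite !mxE -expr2.
rewrite mxvec_sumsq; apply: eq_bigr => k _.
rewrite -sqnorm_vecc /sqnorm mxE; apply: eq_bigr => a _.
by rewrite !mxE expr2.
Qed.

Lemma qformD (R : pzRingType) (n : nat) (A B : 'M[R]_n) (v : 'rV[R]_n) :
  qform (A + B) v = qform A v + qform B v.
Proof. by rewrite /qform mulmxDr mulmxDl mxE. Qed.

Lemma psd_qform_congr (R : realFieldType) (n : nat) (B M : 'M[R]_n)
    (v : 'rV[R]_n) :
  psd_mx B -> M^T = M -> 0 <= qform (M *m B *m M) v.
Proof.
move=> [_ psdB] MT; have := psdB (v *m M).
by rewrite /qform trmx_mul MT !mulmxA.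
Qed.

Lemma one_sub_sqr_split (R : pzRingType) (n : nat) (A : 'M[R]_n) :
  1%:M - A *m A =
  (1%:M - A) + A *m (1%:M - A) *m A + (1%:M - A) *m A *m (1%:M - A).
Proof.
rewrite !(mulmxBr, mulmxBl) !(mulmx1, mul1mx) -!addrA; congr (_ + _).
rewrite opprB !addrA (addrAC _ (- (A *m A *m A))) (addrAC (- A)) addNr add0r.
by rewrite (addrAC (A *m A)) subrr add0r addNr add0r.
Qed.

Lemma psd_contraction (R : realFieldType) (n : nat) (A : 'M[R]_n)
    (x : 'cV[R]_n) :
  psd_mx A -> psd_mx (1%:M - A) -> sqnorm (A *m x) <= sqnorm x.
Proof.
move=> psdA psdIA; have AT := psdA.1.
have normAx : sqnorm (A *m x) = qform (A *m A) x^T.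
  by rewrite /sqnorm /qform trmx_mul AT trmxK !mulmxA.
have normx : sqnorm x = qform 1%:M x^T by rewrite /qform mulmx1 trmxK.
have normB : qform 1%:M x^T - qform (A *m A) x^T = qform (1%:M - A *m A) x^T.
  by rewrite /qform mulmxBr mulmxBl !mxE.
rewrite normAx normx -subr_ge0 normB one_sub_sqr_split qformD (qformD (1%:M - A)).
apply: addr_ge0; first apply: addr_ge0.
- exact: psdIA.2.
- exact: psd_qform_congr.
- by apply: psd_qform_congr; rewrite // linearB /= trmx1 AT.
Qed.

Lemma nonexpansive_iteration (R : realFieldType) (n I : nat)
    (A : nat -> 'M[R]_n) (x : nat -> 'cV[R]_n) :
  (forall i, (i < I)%N ->
     psd_mx (A i) /\ psd_mx (1%:M - A i) /\ x i.+1 = A i *m x i) ->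
  forall i, (i <= I)%N -> sqnorm (x i) <= sqnorm (x 0%N).
Proof.
move=> step; elim=> [|i IH] hi; first exact: lexx.
have [psdA [psdIA ->]] := step i hi.
exact: le_trans (psd_contraction _ psdA psdIA) (IH (ltnW hi)).
Qed.

Lemma eigvals_pos (R : realFieldType) (n : nat) (A : 'M[R]_n) (s : 'rV[R]_n) :
  posdef_mx A -> eigvals_vec A s -> forall j, 0 < s 0 j.
Proof.
move=> [_ pdA] hs j.
have : eigenvalue A (s 0 j).
  rewrite eigenvalue_root_char hs /root horner_prod (bigD1 j) //=.
  by rewrite hornerXsubC subrr mul0r.
case/eigenvalueP => v Av vnz.
have vv_ge0 : 0 <= (v *m v^T) 0 0.
  by rewrite mxE; apply: sumr_ge0 => i _; rewrite mxE -expr2 sqr_ge0.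
have := pdA v vnz; rewrite Av -scalemxAl mxE.
move: vv_ge0; rewrite le0r => /orP [/eqP -> |vv_gt0].
  by rewrite mulr0 ltxx.
by rewrite pmulr_lgt0.
Qed.

Lemma trace_eigvals (R : fieldType) (n : nat) (A : 'M[R]_n) (s : 'rV[R]_n) :
  eigvals_vec A s -> \tr A = \sum_j s 0 j.
Proof.
case: n A s => [|n] A s hs; first by rewrite /mxtrace !big_ord0.
apply: oppr_inj; rewrite -char_poly_trace //= hs.
have := @coefPn_prod_XsubC R [seq s 0 j | j <- enum 'I_n.+1].
by rewrite size_map size_enum_ord !big_map -!enumT !big_enum /= => ->.
Qed.

Lemma ratio_sum_ge2 (R : realFieldType) (x y : R) :
  0 < x -> 0 < y -> 2 <= x / y + y / x.
Proof.
move=> hx hy; rewrite -subr_ge0.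
have -> : x / y + y / x - 2 = (x - y) ^+ 2 / (x * y).
  by field; rewrite !gt_eqF.
by rewrite divr_ge0 ?sqr_ge0 // ltW ?mulr_gt0.
Qed.

Lemma hm_am (R : realFieldType) (T : finType) (f : T -> R) :
  (forall i, 0 < f i) -> #|T|%:R ^+ 2 <= (\sum_i f i) * (\sum_i (f i)^-1).
Proof.
move=> fpos.
have -> : (\sum_i f i) * (\sum_i (f i)^-1) = \sum_i \sum_j f i / f j.
  by rewrite mulr_suml; apply: eq_bigr => i _; rewrite mulr_sumr.
set S := \sum_i _.
have symS : 2 * S = \sum_i \sum_j (f i / f j + f j / f i).
  rewrite mulr2n mulrDl mul1r {1}/S [in X in _ + X = _]/S.
  rewrite [in X in _ + X = _]exchange_big -big_split /=.
  by apply: eq_bigr => i _; rewrite -big_split.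
have card2 : 2 * #|T|%:R ^+ 2 = \sum_(i : T) \sum_(j : T) (2 : R).
  by rewrite !sumr_const -mulrnA -[RHS]mulr_natr natrM -expr2.
rewrite -(@ler_pM2l _ 2) // card2 symS.
by apply: ler_sum => i _; apply: ler_sum => j _; apply: ratio_sum_ge2.
Qed.

Lemma sum_inv_lower_bound (R : realFieldType) (T : finType) (f : T -> R)
    (D : R) :
  (forall i, 0 < f i) -> \sum_i f i <= D -> #|T|%:R ^+ 2 / D <= \sum_i (f i)^-1.
Proof.
move=> fpos sumD.
have inv_ge0 : 0 <= \sum_i (f i)^-1.
  by apply: sumr_ge0 => i _; rewrite invr_ge0 ltW.
have [T0 | [i0 _]] := set_0Vmem [set: T].
  by rewrite -cardsT T0 cards0 expr0n mul0r.
have sum_gt0 : 0 < \sum_i f i.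
  rewrite (bigD1 i0) //=; apply: ltr_pwDl (fpos i0) _.
  by apply: sumr_ge0 => i _; rewrite ltW.
have D_gt0 := lt_le_trans sum_gt0 sumD.
rewrite ler_pdivrMr // mulrC.
exact: le_trans (hm_am fpos) (ler_wpM2r inv_ge0 sumD).
Qed.

Lemma invmx_diag (R : fieldType) (n : nat) (d : 'rV[R]_n) :
  (forall j, d 0 j != 0) -> invmx (diag_mx d) = diag_mx (\row_j (d 0 j)^-1).
Proof.
move=> dnz.
have inv_d : diag_mx (\row_j (d 0 j)^-1) *m diag_mx d = 1%:M.
  rewrite mulmx_diag -diag_const_mx; congr diag_mx; apply/rowP => j.
  by rewrite !mxE mulVf.
have [_ d_unit] := mulmx1_unit inv_d.
by rewrite -[RHS](mulmxK d_unit) inv_d mul1mx.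
Qed.

Lemma tr_inv_harmonic_mean (R : fieldType) (n C : nat) (lam : 'I_C -> 'rV[R]_n) :
  (forall c j, lam c 0 j != 0) ->
  \tr (invmx (invmx (C%:R^-1 *: \sum_(c < C) invmx (diag_mx (lam c))))) =
  C%:R^-1 * \sum_(c < C) \sum_(j < n) (lam c 0 j)^-1.
Proof.
move=> lam_nz; rewrite invmxK mxtraceZ raddf_sum /=; congr (_ * _).
apply: eq_bigr => c _; rewrite invmx_diag // mxtrace_diag.
by apply: eq_bigr => j _; rewrite mxE.
Qed.

Theorem theorem1 (R : rcfType) (nu K C I : nat)
  (hnu : (0 < nu)%N) (hK : (0 < K)%N) (hC : (0 < C)%N) (hI : (0 < I)%N)
  (Shalf : nat -> 'I_C -> 'I_K -> 'M[R]_nu)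
  (Isig : nat -> 'I_C -> 'M[R]_(K * (nu * nu)))
  (lam : 'I_C -> 'I_K -> 'rV[R]_nu) :
  (forall i c k, (i <= I)%N -> posdef_mx ((Shalf i c k)^T *m Shalf i c k)) ->
  (forall i c, (i < I)%N ->
     psd_mx (Isig i c) /\ psd_mx (1%:M - Isig i c) /\
     colvec (Shalf i.+1 c) = Isig i c *m colvec (Shalf i c)) ->
  (forall c k, eigvals_vec ((Shalf I c k)^T *m Shalf I c k) (lam c k)) ->
  let SigmaL (k : 'I_K) : 'M[R]_nu :=
    invmx (C%:R^-1 *: \sum_(c < C) invmx (diag_mx (lam c k))) in
  \sum_(k < K) \tr (invmx (SigmaL k)) >=
    (nu ^ 2 * K ^ 2)%:R / C%:R *
    \sum_(c < C) (\sum_(k < K) \tr ((Shalf 0%N c k)^T *m Shalf 0%N c k))^-1.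
Proof.
move=> posdef update eigs /=.
have lam_pos c k j : 0 < lam c k 0 j.
  by apply: eigvals_pos (eigs c k) j; apply: posdef.
(* Tr((Sigma^L_k)^-1) averages the inverse eigenvalues over c; it then
   suffices to compare the summands indexed by c. *)
rewrite (eq_bigr _ (fun k _ =>
  tr_inv_harmonic_mean (fun c j => lt0r_neq0 (lam_pos c k j)))).
rewrite -mulr_sumr exchange_big /= mulrAC [X in X <= _]mulrC.
rewrite ler_pM2l ?invr_gt0 ?ltr0n // mulr_sumr; apply: ler_sum => c _.
(* The total trace at iteration I bounds the sum of the eigenvalues ... *)
have trace_decay : \sum_(p : 'I_K * 'I_nu) lam c p.1 0 p.2 <=
    \sum_k \tr ((Shalf 0%N c k)^T *m Shalf 0%N c k).
  rewrite -(pair_big xpredT xpredT (fun k j => lam c k 0 j)) /= -sqnorm_colvec.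
  under eq_bigr do rewrite -(trace_eigvals (eigs c _)).
  rewrite -sqnorm_colvec.
  exact: nonexpansive_iteration (fun i => update i c) I (leqnn I).
(* ... and the harmonic-arithmetic mean inequality concludes. *)
have := sum_inv_lower_bound (fun p => lam_pos c p.1 p.2) trace_decay.
rewrite card_prod !card_ord.
rewrite -(pair_big xpredT xpredT (fun k j => (lam c k 0 j)^-1)) /=.
by rewrite -natrX expnMn mulnC.
Qed.
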